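(* Let $P\in S^n$. Then: (1) $\overline{\mathcal{H}_{\rm Wulff}(S^n,P)}\subset\mathcal{H}^\circ(S^n)$; (2) $\bigcirc(\mathcal{H}_{\rm Wulff}(S^n,P))=\mathcal{H}_{\rm Wulff}(S^n,P)$; (3) $\bigcirc(\overline{\mathcal{H}_{\rm Wulff}(S^n,P)})=\overline{\mathcal{H}_{\rm Wulff}(S^n,P)}$; (4) the restriction of $\bigcirc$ to $\overline{\mathcal{H}_{\rm Wulff}(S^n,P)}$ is injective. Here $\bigcirc(W)=W^\circ$.
   Context: $S^n$ is the unit sphere in $\mathbb{R}^{n+1}$, $n\ge1$; $|PQ|=\arccos(P\cdot Q)$. $H(P)=\{Q\in S^n:P\cdot Q\ge0\}$ and $W^\circ=\bigcap_{P\in W}H(P)$. $\mathcal{H}(S^n)$ is the set of non-empty closed subsets of $S^n$ with the Pompeiu-Hausdorff metric $h(A,B)=\max\{\max_{x\in A}\min_{y\in B}|xy|,\ \max_{y\in B}\min_{x\in A}|xy|\}$, and $\mathcal{H}^\circ(S^n)=\{W\in\mathcal{H}(S^n):W^\circ\ne\emptyset\}$. A subset is hemispherical if it is disjoint from $H(Q)$ for some $Q\in S^n$. For $A,B$ in a hemispherical set, the arc $AB=\{((1-t)A+tB)/\|(1-t)A+tB\|:0\le t\le1\}$; a hemispherical set $W$ is spherical convex if $AB\subset W$ for all $A,B\in W$, and a spherical convex body if moreover it is closed and has an interior point. $\mathcal{H}_{\rm Wulff}(S^n,P)$ is the set of $W\in\mathcal{H}(S^n)$ with $W\cap H(-P)=\emptyset$,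 $P$ an interior point of $W$, and $W$ a spherical convex body; $\overline{\mathcal{H}_{\rm Wulff}(S^n,P)}$ is its closure in $(\mathcal{H}(S^n),h)$. *)

From Stdlib Require Import Reals Lra.
Open Scope R_scope.

(* Points of R^{n+1} are functions nat -> R supported on {0,...,n}. *)
Definition vec := nat -> R.
Definition set := vec -> Prop.

Definition dot (n : nat) (x y : vec) : R := sum_f_R0 (fun i => x i * y i) n.

Definition supp (n : nat) (x : vec) : Prop := forall i, (n < i)%nat -> x i = 0.

Definition sphere (n : nat) (x : vec) : Prop := supp n x /\ dot n x x = 1.

Definition sdist (n : nat) (P Q : vec) : R := acos (dot n P Q).

Definition vopp (x : vec) : vec := fun i => - x i.

Definition hemi (n : nat) (P : vec) : set := fun Q => sphere n Q /\ dot n P Q >= 0.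

Definition polar (n : nat) (W : set) : set :=
  fun Q => sphere n Q /\ forall P, W P -> hemi n P Q.

Definition subset_of (A B : set) : Prop := forall x, A x -> B x.
Definition seteq (A B : set) : Prop := forall x, A x <-> B x.
Definition nonempty (A : set) : Prop := exists x, A x.

Definition sclosed (n : nat) (W : set) : Prop :=
  forall x, sphere n x ->
    (forall eps, eps > 0 -> exists y, W y /\ sdist n x y < eps) -> W x.

Definition HS (n : nat) (W : set) : Prop :=
  subset_of W (sphere n) /\ nonempty W /\ sclosed n W.

Definition HScirc (n : nat) (W : set) : Prop := HS n W /\ nonempty (polar n W).

(* For non-empty closed (compact) A, B in S^n this holds iff
   h(A,B) <= r, since the max/min in the definition of h are attained. *)
Definition hclose (n : nat) (A B : set) (r : R) : Prop :=
  (forall x, A x -> exists y, B y /\ sdist n x y <= r) /\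
  (forall y, B y -> exists x, A x /\ sdist n x y <= r).

Definition hdist_lt (n : nat) (A B : set) (eps : R) : Prop :=
  exists r, r < eps /\ hclose n A B r.

Definition hemispherical (n : nat) (W : set) : Prop :=
  exists Q, sphere n Q /\ forall x, W x -> ~ hemi n Q x.

Definition arcpt (n : nat) (A B : vec) (t : R) : vec :=
  let v := fun i => (1 - t) * A i + t * B i in
  fun i => v i / sqrt (dot n v v).

Definition sconvex (n : nat) (W : set) : Prop :=
  hemispherical n W /\
  forall A B, W A -> W B -> forall t, 0 <= t <= 1 -> W (arcpt n A B t).

Definition interior_pt (n : nat) (W : set) (P : vec) : Prop :=
  W P /\ exists eps, eps > 0 /\ forall Q, sphere n Q -> sdist n P Q < eps -> W Q.

Definition sconvex_body (n : nat) (W : set) : Prop :=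
  sconvex n W /\ sclosed n W /\ exists P, interior_pt n W P.

Definition HWulff (n : nat) (P : vec) (W : set) : Prop :=
  HS n W /\ (forall x, W x -> ~ hemi n (vopp P) x) /\
  interior_pt n W P /\ sconvex_body n W.

Definition HWulff_cl (n : nat) (P : vec) (W : set) : Prop :=
  HS n W /\ forall eps, eps > 0 -> exists W', HWulff n P W' /\ hdist_lt n W W' eps.

(* Polarity is an involution on nonempty closed subsets [W] of the sphere that are convex, in the
   sense that the cone over [W] is convex: this is the bipolar theorem, proved by separating a point
   outside [W] from its nearest point in [W], which exists by compactness of the sphere.
   A Wulff shape of [P] is such a set lying in the open hemisphere of [P] with [P] in its interior;
   polarity exchanges the two conditions "[P] interior" and "[P.x > 0] on the set", so it maps Wulff
   shapes to Wulff shapes.  The limits of Wulff shapes are exactly the closed convex sets containing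
   [P] and lying in the closed hemisphere of [P]: conversely such a [W = W°°] is approximated by the
   Wulff shapes obtained by tilting each constraint [Q.x >= 0] of [W°°] slightly towards [P].  This
   class is again stable under polarity, and polarity is injective on it because [W°° = W]. *)

From Stdlib Require Import Reals Lra Lia Classical ClassicalEpsilon FunctionalExtensionality.
Open Scope R_scope.

Definition vcomb (a : R) (x : vec) (b : R) (y : vec) : vec := fun i => a * x i + b * y i.

(* Junk value: [normalize n 0 = 0], since [/ sqrt 0 = 0]. *)
Definition normalize (n : nat) (v : vec) : vec := fun i => v i / sqrt (dot n v v).

Lemma arcpt_normalize n A B t : arcpt n A B t = normalize n (vcomb (1 - t) A t B).
Proof. reflexivity. Qed.

Lemma sqrt_sq_pos x : 0 < x -> sqrt x * sqrt x = x /\ 0 < sqrt x.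
Proof. intros Hx; split; [apply sqrt_sqrt; lra | apply sqrt_lt_R0; exact Hx]. Qed.

Lemma Rle_div_of_mul x y c : 0 < y -> c * y <= x -> c <= x / y.
Proof. intros Hy H. apply Rmult_le_reg_r with y; auto. replace (x / y * y) with x by (field; lra). lra. Qed.

Lemma dot_sym n x y : dot n x y = dot n y x.
Proof. apply sum_eq; intros; ring. Qed.

Lemma dot_vcomb_l n a x b y z : dot n (vcomb a x b y) z = a * dot n x z + b * dot n y z.
Proof. unfold dot, vcomb; induction n; simpl; [|rewrite IHn]; ring. Qed.

Lemma dot_vcomb_r n a x b y z : dot n z (vcomb a x b y) = a * dot n z x + b * dot n z y.
Proof. rewrite dot_sym, dot_vcomb_l, (dot_sym n x), (dot_sym n y); ring. Qed.

Lemma dot_div_l n x c y : dot n (fun i => x i / c) y = dot n x y / c.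
Proof. unfold dot, Rdiv; induction n; simpl; [|rewrite IHn]; ring. Qed.

Lemma dot_normalize_l n v y : dot n (normalize n v) y = dot n v y / sqrt (dot n v v).
Proof. apply dot_div_l. Qed.

Lemma dot_vopp_l n x y : dot n (vopp x) y = - dot n x y.
Proof. unfold dot, vopp; induction n; simpl; [|rewrite IHn]; ring. Qed.

Lemma dot_self_ge0 n x : 0 <= dot n x x.
Proof. unfold dot; induction n; simpl; nra. Qed.

Lemma coord_sq_le_dot n x i : (i <= n)%nat -> x i * x i <= dot n x x.
Proof.
  unfold dot; induction n; intros Hi; simpl.
  - replace i with 0%nat by lia. lra.
  - pose proof (dot_self_ge0 n x) as H0. unfold dot in H0.
    destruct (Nat.eq_dec i (S n)) as [->|Hne]; [nra|].
    specialize (IHn ltac:(lia)). nra.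
Qed.

Lemma dot_self_eq0 n x : dot n x x = 0 -> forall i, (i <= n)%nat -> x i = 0.
Proof. intros H i Hi. pose proof (coord_sq_le_dot n x i Hi). nra. Qed.

Lemma dot_eq0_l n x y : (forall i, (i <= n)%nat -> x i = 0) -> dot n x y = 0.
Proof.
  intros H. unfold dot. rewrite (sum_eq _ (fun _ => 0)), sum_cte; [ring|].
  intros i Hi; rewrite H by exact Hi; ring.
Qed.

Lemma dot_self_pos_of_dot n P v : dot n P v > 0 -> 0 < dot n v v.
Proof.
  intros H. destruct (Rle_lt_dec (dot n v v) 0) as [Hle|]; auto.
  pose proof (dot_self_ge0 n v).
  rewrite dot_sym, dot_eq0_l in H; [lra|]. apply dot_self_eq0; lra.
Qed.

Lemma dot_Cauchy_Schwarz n x y : dot n x y * dot n x y <= dot n x x * dot n y y.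
Proof.
  destruct (Req_dec (dot n y y) 0) as [H0|H0].
  - rewrite (dot_sym n x y), dot_eq0_l; [nra|]. apply dot_self_eq0; auto.
  - set (a := dot n y y). set (b := dot n x y).
    pose proof (dot_self_ge0 n (vcomb a x (-b) y)) as H.
    rewrite dot_vcomb_l, !dot_vcomb_r, (dot_sym n y x) in H. fold a b in H.
    assert (0 < a) by (pose proof (dot_self_ge0 n y); unfold a in *; lra).
    assert (0 <= a * dot n x x - b * b); [|nra].
    destruct (Rle_lt_dec 0 (a * dot n x x - b * b)); auto. nra.
Qed.

Lemma supp_vcomb n a x b y : supp n x -> supp n y -> supp n (vcomb a x b y).
Proof. unfold supp, vcomb; intros Hx Hy i Hi; rewrite Hx, Hy by auto; ring. Qed.

Lemma supp_vopp n x : supp n x -> supp n (vopp x).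
Proof. unfold supp, vopp; intros Hx i Hi; rewrite Hx by auto; ring. Qed.

Lemma sphere_vopp n x : sphere n x -> sphere n (vopp x).
Proof.
  intros [Hs Hd]; split; [apply supp_vopp; auto|].
  rewrite dot_vopp_l, dot_sym, dot_vopp_l; lra.
Qed.

Lemma sphere_normalize n v : supp n v -> 0 < dot n v v -> sphere n (normalize n v).
Proof.
  intros Hs Hp; split.
  - intros i Hi; unfold normalize; rewrite Hs by exact Hi; unfold Rdiv; ring.
  - rewrite dot_normalize_l, dot_sym, dot_normalize_l.
    destruct (sqrt_sq_pos _ Hp) as [H2 H0].
    unfold Rdiv. rewrite Rmult_assoc, <- Rinv_mult, H2. field; lra.
Qed.

Lemma sphere_dot_bounds n x y : sphere n x -> sphere n y -> -1 <= dot n x y <= 1.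
Proof.
  intros [_ Hx] [_ Hy]. pose proof (dot_Cauchy_Schwarz n x y). rewrite Hx, Hy in H. nra.
Qed.

Lemma sphere_dot_eq1 n x y : sphere n x -> sphere n y -> dot n x y = 1 -> x = y.
Proof.
  intros [Sx Hx] [Sy Hy] H. apply functional_extensionality; intros i.
  destruct (Compare_dec.le_lt_dec i n) as [Hi|Hi].
  - assert (E : dot n (vcomb 1 x (-1) y) (vcomb 1 x (-1) y) = 0).
    { rewrite dot_vcomb_l, !dot_vcomb_r, (dot_sym n y x), Hx, Hy, H. ring. }
    pose proof (dot_self_eq0 _ _ E i Hi). unfold vcomb in *. lra.
  - rewrite Sx, Sy by auto. reflexivity.
Qed.

(* On the sphere, [1 - x.y] is half the squared chordal distance. *)
Lemma dot_triangle n x y z : sphere n x -> sphere n y -> sphere n z ->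
  1 - dot n x z <= 2 * (1 - dot n x y) + 2 * (1 - dot n y z).
Proof.
  intros [_ Hx] [_ Hy] [_ Hz].
  pose proof (dot_self_ge0 n (vcomb 1 (vcomb 1 x (-2) y) 1 z)) as H.
  repeat rewrite ?dot_vcomb_l, ?dot_vcomb_r in H.
  rewrite (dot_sym n y x), (dot_sym n z x), (dot_sym n z y) in H. lra.
Qed.

Lemma dot_diff_sq_le n a x y : sphere n x -> sphere n y ->
  (dot n a x - dot n a y) * (dot n a x - dot n a y) <= dot n a a * (2 * (1 - dot n x y)).
Proof.
  intros [_ Hx] [_ Hy]. pose proof (dot_Cauchy_Schwarz n a (vcomb 1 x (-1) y)) as H.
  rewrite !dot_vcomb_r, !dot_vcomb_l, (dot_sym n y x), Hx, Hy in H.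
  replace (2 * (1 - dot n x y)) with (1 * (1 * 1 + -1 * dot n x y) + -1 * (1 * dot n x y + -1 * 1)) by ring.
  nra.
Qed.

Lemma normalize_scale n c v : 0 < c -> 0 < dot n v v -> normalize n (vcomb c v 0 v) = normalize n v.
Proof.
  intros Hc Hv. apply functional_extensionality; intros i. unfold normalize.
  rewrite dot_vcomb_l, !dot_vcomb_r.
  replace (c * (c * dot n v v + 0 * dot n v v) + 0 * (c * dot n v v + 0 * dot n v v))
    with ((c * c) * dot n v v) by ring.
  rewrite sqrt_mult, sqrt_square by nra. unfold vcomb.
  pose proof (sqrt_lt_R0 _ Hv). field. lra.
Qed.

Lemma normalize_perturb n x u d eta : sphere n x -> dot n u u <= d -> 0 <= d -> d <= 1/4 -> 8 * d < eta ->
  0 < dot n (vcomb 1 x 1 u) (vcomb 1 x 1 u) /\ dot n x (normalize n (vcomb 1 x 1 u)) > 1 - eta.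
Proof.
  intros [Sx Hx] Hu Hd0 Hd1 Heta.
  set (p := dot n x u).
  assert (Hp : p * p <= dot n u u).
  { pose proof (dot_Cauchy_Schwarz n x u). fold p in H. rewrite Hx in H. lra. }
  assert (Hvv : dot n (vcomb 1 x 1 u) (vcomb 1 x 1 u) = 1 + 2 * p + dot n u u).
  { rewrite dot_vcomb_l, !dot_vcomb_r, (dot_sym n u x). fold p. rewrite Hx. ring. }
  assert (Hp2 : -1/2 <= p) by nra.
  assert (Hpos : 0 < dot n (vcomb 1 x 1 u) (vcomb 1 x 1 u)).
  { rewrite Hvv. pose proof (dot_self_ge0 n u). nra. }
  split; auto.
  rewrite dot_sym, dot_normalize_l, dot_vcomb_l, (dot_sym n u x). fold p. rewrite Hx.
  destruct (sqrt_sq_pos _ Hpos) as [Hs Hs0].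
  set (s := sqrt (dot n (vcomb 1 x 1 u) (vcomb 1 x 1 u))) in *.
  apply Rlt_gt, Rmult_lt_reg_r with s; auto.
  replace ((1 * 1 + 1 * p) / s * s) with (1 + p) by (field; lra).
  destruct (Rle_lt_dec eta 1); [|nra].
  assert (E1 : s * s = (1 + p) * (1 + p) + (dot n u u - p * p)) by (rewrite Hs, Hvv; ring).
  assert (1/4 <= (1 + p) * (1 + p)) by nra.
  assert (eta <= 2 * eta - eta * eta) by nra.
  assert ((1 - eta) * (1 - eta) * (s * s) < (1 + p) * (1 + p)).
  { rewrite E1. assert ((1 - eta) * (1 - eta) * (dot n u u - p * p) <= d) by nra. nra. }
  nra.
Qed.

Lemma sdist_le_of_dot_ge n r : r > 0 -> exists eta, eta > 0 /\
  forall x y, sphere n x -> sphere n y -> dot n x y >= 1 - eta -> sdist n x y <= r.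
Proof.
  intros Hr. pose proof PI_RGT_0. set (e := Rmin r PI).
  assert (He0 : 0 < e) by (unfold e; apply Rmin_glb_lt; lra).
  assert (He1 : e <= PI) by apply Rmin_r. assert (He2 : e <= r) by apply Rmin_l.
  assert (Hc : cos e < 1) by (rewrite <- cos_0; apply cos_decreasing_1; lra).
  exists (1 - cos e); split; [lra|].
  intros x y Hx Hy Hd. pose proof (sphere_dot_bounds n x y Hx Hy). unfold sdist.
  set (d := dot n x y) in *. pose proof (acos_bound d).
  destruct (Rle_lt_dec (acos d) e); [lra|].
  assert (Hq : cos (acos d) < cos e) by (apply cos_decreasing_1; lra).
  rewrite cos_acos in Hq; lra.
Qed.

Lemma sdist_lt_of_dot_gt n eps : eps > 0 -> exists eta, eta > 0 /\
  forall x y, sphere n x -> sphere n y -> dot n x y > 1 - eta -> sdist n x y < eps.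
Proof.
  intros He. destruct (sdist_le_of_dot_ge n (eps / 2)) as [eta [Heta H]]; [lra|].
  exists eta; split; auto. intros x y Hx Hy Hd. specialize (H x y Hx Hy ltac:(lra)). lra.
Qed.

Lemma dot_gt_of_sdist_lt n eta : eta > 0 -> exists eps, eps > 0 /\
  forall x y, sphere n x -> sphere n y -> sdist n x y < eps -> dot n x y > 1 - eta.
Proof.
  intros He. set (e := Rmin eta 1).
  assert (He0 : 0 < e) by (unfold e; apply Rmin_glb_lt; lra).
  assert (He1 : e <= 1) by apply Rmin_r. assert (He2 : e <= eta) by apply Rmin_l.
  exists (acos (1 - e)). pose proof (acos_bound (1 - e)). split.
  - destruct (Req_dec (acos (1 - e)) 0) as [E|E]; [|lra].
    assert (Hq : cos (acos (1 - e)) = 1) by (rewrite E; apply cos_0).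
    rewrite cos_acos in Hq; lra.
  - intros x y Hx Hy Hd. pose proof (sphere_dot_bounds n x y Hx Hy). unfold sdist in Hd.
    set (d := dot n x y) in *. pose proof (acos_bound d).
    assert (Hq : cos (acos (1 - e)) < cos (acos d)) by (apply cos_decreasing_1; lra).
    rewrite !cos_acos in Hq; lra.
Qed.

Lemma sclosed_of_dot n W : subset_of W (sphere n) ->
  (forall x, sphere n x -> (forall eta, eta > 0 -> exists y, W y /\ dot n x y > 1 - eta) -> W x) ->
  sclosed n W.
Proof.
  intros HS H x Hx Happ. apply H; auto. intros eta Heta.
  destruct (dot_gt_of_sdist_lt n eta Heta) as [eps [Heps Hsd]].
  destruct (Happ eps Heps) as [y [Wy Hy]]. exists y; auto.
Qed.

Lemma sclosed_dot n W x : sclosed n W -> subset_of W (sphere n) -> sphere n x ->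
  (forall eta, eta > 0 -> exists y, W y /\ dot n x y > 1 - eta) -> W x.
Proof.
  intros Hc HS Hx Happ. apply Hc; auto. intros eps Heps.
  destruct (sdist_lt_of_dot_gt n eps Heps) as [eta [Heta Hsd]].
  destruct (Happ eta Heta) as [y [Wy Hy]]. exists y; auto.
Qed.

Lemma dot_ge_of_approx n a c x : sphere n x ->
  (forall eta, eta > 0 -> exists y, sphere n y /\ dot n a y >= c /\ dot n x y > 1 - eta) ->
  dot n a x >= c.
Proof.
  intros Hx H. apply Rnot_lt_ge; intros Hlt.
  set (g := c - dot n a x). assert (Hg : 0 < g) by (unfold g; lra).
  pose proof (dot_self_ge0 n a).
  set (k := 2 * (dot n a a + 1)). assert (Hk0 : 0 < k) by (unfold k; lra).
  destruct (H (g * g / k)) as [y [Hy [Hay Hxy]]].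
  { apply Rlt_gt, Rdiv_lt_0_compat; nra. }
  pose proof (dot_diff_sq_le n a x y Hx Hy).
  assert (Hk : k * (1 - dot n x y) < g * g).
  { replace (g * g) with (k * (g * g / k)) by (field; lra).
    apply Rmult_lt_compat_l; lra. }
  pose proof (sphere_dot_bounds n x y Hx Hy).
  assert (g <= dot n a y - dot n a x) by (unfold g; lra).
  assert (g * g <= (dot n a x - dot n a y) * (dot n a x - dot n a y)) by nra.
  unfold k in Hk. nra.
Qed.

Definition strictly_increasing (phi : nat -> nat) : Prop := forall k, (phi k < phi (S k))%nat.

Lemma strictly_increasing_ge phi : strictly_increasing phi -> forall k, (k <= phi k)%nat.
Proof. intros H k; induction k; [lia|]. specialize (H k). lia. Qed.

Lemma strictly_increasing_lt phi : strictly_increasing phi ->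
  forall a b, (a < b)%nat -> (phi a < phi b)%nat.
Proof. intros H a b Hab; induction Hab; [apply H|]. specialize (H m). lia. Qed.

Lemma strictly_increasing_comp phi psi : strictly_increasing phi -> strictly_increasing psi ->
  strictly_increasing (fun k => phi (psi k)).
Proof. intros Hphi Hpsi k. apply strictly_increasing_lt; auto. Qed.

Lemma Un_cv_subseq u l phi : Un_cv u l -> strictly_increasing phi -> Un_cv (fun k => u (phi k)) l.
Proof.
  intros Hu Hp eps He. destruct (Hu eps He) as [N HN]. exists N. intros k Hk.
  apply HN. pose proof (strictly_increasing_ge phi Hp k). lia.
Qed.

Lemma Un_cv_const (c : R) : Un_cv (fun _ => c) c.
Proof. intros eps He. exists 0%nat. intros; unfold Rdist. rewrite Rminus_diag, Rabs_R0. lra. Qed.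

Lemma inv_INR_succ_cv : Un_cv (fun k => / (INR k + 1)) 0.
Proof. exact RinvN_cv. Qed.

Lemma inv_INR_succ_le j k : (j <= k)%nat -> / (INR k + 1) <= / (INR j + 1).
Proof.
  intros Hjk. apply Rinv_le_contravar; [pose proof (pos_INR j); lra|].
  apply Rplus_le_compat_r, le_INR, Hjk.
Qed.

(* The subsequence picks, at step [k+1], an index beyond the previous one. *)
Fixpoint iter_index (f : nat -> nat) (k : nat) : nat :=
  match k with O => f O | S k => f (S (iter_index f k)) end.

Lemma Bolzano_Weierstrass_subseq (u : nat -> R) M : (forall k, Rabs (u k) <= M) ->
  exists phi l, strictly_increasing phi /\ Un_cv (fun k => u (phi k)) l.
Proof.
  intros HM.
  destruct (Bolzano_Weierstrass u (fun c => -M <= c <= M) (compact_P3 (-M) M)) as [l Hl].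
  { intros k. specialize (HM k). pose proof (Rle_abs (u k)). pose proof (Rle_abs (- u k)). rewrite Rabs_Ropp in *. lra. }
  assert (Hnear : forall N : nat, exists p, (N <= p)%nat /\ Rabs (u p - l) < / (INR N + 1)).
  { intros N. destruct (Hl (disc l (RinvN N)) N) as [p [Hp1 Hp2]].
    - exists (RinvN N). intros y Hy; exact Hy.
    - exists p; auto. }
  apply choice in Hnear as [f Hf].
  set (phi := iter_index f).
  assert (Hinc : strictly_increasing phi).
  { intros k. change (phi (S k)) with (f (S (phi k))). destruct (Hf (S (phi k))). lia. }
  assert (Hb : forall k, Rabs (u (phi k) - l) < / (INR k + 1)).
  { intros [|k]; [apply Hf|].
    change (phi (S k)) with (f (S (phi k))).
    eapply Rlt_le_trans; [apply Hf|]. apply inv_INR_succ_le.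
    pose proof (strictly_increasing_ge _ Hinc k). lia. }
  exists phi, l. split; auto.
  intros eps He. destruct (inv_INR_succ_cv eps He) as [N HN]. exists N. intros k Hk.
  specialize (HN k Hk). unfold Rdist in *. rewrite Rminus_0_r, Rabs_pos_eq in HN.
  - eapply Rlt_trans; [apply Hb | exact HN].
  - apply Rlt_le, RinvN_pos.
Qed.

Lemma bounded_seq_coords_subseq (u : nat -> vec) M : (forall k i, Rabs (u k i) <= M) ->
  forall m, exists phi (l : vec), strictly_increasing phi /\
    forall i, (i < m)%nat -> Un_cv (fun k => u (phi k) i) (l i).
Proof.
  intros HM m. induction m as [|m [phi [l [Hphi Hl]]]].
  - exists (fun k => k), (fun _ => 0). split; [intros k; lia | intros; lia].
  - destruct (Bolzano_Weierstrass_subseq (fun k => u (phi k) m) M) as [psi [c [Hpsi Hc]]].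
    { intros; apply HM. }
    exists (fun k => phi (psi k)), (fun i => if Nat.eqb i m then c else l i).
    split; [apply strictly_increasing_comp; auto|].
    intros i Hi. destruct (Nat.eqb_spec i m) as [->|Hne]; [exact Hc|].
    apply (Un_cv_subseq (fun k => u (phi k) i)); auto. apply Hl; lia.
Qed.

Lemma dot_cv n (x y : nat -> vec) (l m : vec) :
  (forall i, (i <= n)%nat -> Un_cv (fun k => x k i) (l i)) ->
  (forall i, (i <= n)%nat -> Un_cv (fun k => y k i) (m i)) ->
  Un_cv (fun k => dot n (x k) (y k)) (dot n l m).
Proof.
  intros Hx Hy. unfold dot. induction n; simpl.
  - apply CV_mult; auto.
  - apply CV_plus; [apply IHn; intros; [apply Hx | apply Hy]; lia | apply CV_mult; auto].
Qed.

Lemma dot_cv_r n a (y : nat -> vec) (m : vec) :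
  (forall i, (i <= n)%nat -> Un_cv (fun k => y k i) (m i)) ->
  Un_cv (fun k => dot n a (y k)) (dot n a m).
Proof. intros Hy. apply (dot_cv n (fun _ => a)); auto. intros; apply Un_cv_const. Qed.

Lemma sphere_seq_subseq_cv n (u : nat -> vec) : (forall k, sphere n (u k)) ->
  exists phi l, strictly_increasing phi /\ sphere n l /\
    forall i, (i <= n)%nat -> Un_cv (fun k => u (phi k) i) (l i).
Proof.
  intros Hu.
  assert (Hbd : forall k i, Rabs (u k i) <= 1).
  { intros k i. destruct (Hu k) as [Hsu Hdu].
    destruct (Compare_dec.le_lt_dec i n) as [Hi|Hi].
    - pose proof (coord_sq_le_dot n (u k) i Hi). rewrite Hdu in H. apply Rabs_le; nra.
    - rewrite Hsu by auto. rewrite Rabs_R0; lra. }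
  destruct (bounded_seq_coords_subseq u 1 Hbd (S n)) as [phi [l [Hphi Hl]]].
  set (l' := fun i => if Nat.leb i n then l i else 0).
  assert (Hl' : forall i, (i <= n)%nat -> Un_cv (fun k => u (phi k) i) (l' i)).
  { intros i Hi. unfold l'. rewrite (proj2 (Nat.leb_le i n) Hi). apply Hl; lia. }
  exists phi, l'. split; [|split]; auto. split.
  - intros i Hi. unfold l'. rewrite (proj2 (Nat.leb_gt i n) Hi). reflexivity.
  - apply (UL_sequence (fun k => dot n (u (phi k)) (u (phi k)))); [apply dot_cv; auto|].
    replace (fun k => dot n (u (phi k)) (u (phi k))) with (fun _ : nat => 1); [apply Un_cv_const|].
    apply functional_extensionality; intros k. symmetry; apply Hu.
Qed.

Lemma dot_max_attained n W a : subset_of W (sphere n) -> nonempty W -> sclosed n W ->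
  exists w0, W w0 /\ forall w, W w -> dot n a w <= dot n a w0.
Proof.
  intros HS [w1 Hw1] Hcl.
  set (E := fun r => exists w, W w /\ r = dot n a w).
  assert (Hb : bound E).
  { exists ((dot n a a + 1) / 2). intros r [w [Hw ->]].
    pose proof (dot_self_ge0 n (vcomb 1 a (-1) w)) as H.
    rewrite dot_vcomb_l, !dot_vcomb_r, (dot_sym n w a), (proj2 (HS w Hw)) in H. lra. }
  destruct (completeness E Hb (ex_intro _ _ (ex_intro _ w1 (conj Hw1 eq_refl)))) as [s [Hub Hlub]].
  assert (Happrox : forall k : nat, exists w, W w /\ dot n a w > s - / (INR k + 1)).
  { intros k. apply NNPP; intros Hn. pose proof (RinvN_pos k).
    assert (Hsub : is_upper_bound E (s - / (INR k + 1))).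
    { intros r [w [Hw ->]]. apply Rnot_lt_le; intros Hl. apply Hn. exists w; auto. }
    apply Hlub in Hsub. simpl in *. lra. }
  apply choice in Happrox as [u Hu].
  destruct (sphere_seq_subseq_cv n u) as [phi [l [Hphi [Sl Hl]]]]; [intros k; apply HS, Hu|].
  assert (Wl : W l).
  { apply (sclosed_dot n W l Hcl HS Sl). intros eta Heta.
    destruct (dot_cv_r n l (fun k => u (phi k)) _ Hl eta Heta) as [N HN]. specialize (HN N (le_n N)).
    unfold Rdist in HN. cbv beta in HN. apply Rabs_def2 in HN. rewrite (proj2 Sl) in HN.
    exists (u (phi N)). split; [apply Hu|]. lra. }
  exists l. split; auto.
  assert (Hs : s <= dot n a l).
  { apply Rle_cv_lim with (Un := fun k => s - / (INR k + 1)) (Vn := fun k => dot n a (u (phi k))).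
    - intros k. destruct (Hu (phi k)) as [_ Hk].
      pose proof (inv_INR_succ_le _ _ (strictly_increasing_ge _ Hphi k)). lra.
    - pose proof (CV_minus _ _ s 0 (Un_cv_const s) inv_INR_succ_cv) as Hc.
      rewrite Rminus_0_r in Hc. exact Hc.
    - apply dot_cv_r; auto. }
  intros w Hw. apply Rle_trans with s; auto. apply Hub. exists w; auto.
Qed.

(* [W] is the trace on the sphere of a convex cone. *)
Definition comb_closed n (W : set) : Prop :=
  forall a b, W a -> W b -> forall s t, 0 <= s -> 0 <= t ->
    0 < dot n (vcomb s a t b) (vcomb s a t b) -> W (normalize n (vcomb s a t b)).

Lemma polar_intro n W Q : sphere n Q -> (forall w, W w -> dot n w Q >= 0) -> polar n W Q.
Proof. intros SQ H. split; auto. intros w Hw. split; auto. Qed.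

Lemma polar_dot n W Q w : polar n W Q -> W w -> dot n w Q >= 0.
Proof. intros [_ H] Hw. apply H, Hw. Qed.

Lemma polar_sphere n W : subset_of (polar n W) (sphere n).
Proof. intros x [H _]; exact H. Qed.

Lemma polar_seteq n A B : seteq A B -> seteq (polar n A) (polar n B).
Proof. intros H x. split; intros [Sx Hx]; split; auto; intros p Hp; apply Hx, H, Hp. Qed.

Lemma polar_closed n W : sclosed n (polar n W).
Proof.
  apply sclosed_of_dot; [apply polar_sphere|].
  intros x Hx Happ. apply polar_intro; auto. intros w Hw.
  apply dot_ge_of_approx; auto. intros eta Heta.
  destruct (Happ eta Heta) as [y [Py Hxy]].
  exists y. split; [apply (polar_sphere _ _ _ Py)|]. split; auto. apply (polar_dot n W); auto.
Qed.

Lemma polar_comb_closed n W : comb_closed n (polar n W).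
Proof.
  intros a b Pa Pb s t Hs Ht Hv.
  assert (Hsupp : supp n (vcomb s a t b)).
  { apply supp_vcomb; [apply (polar_sphere _ _ _ Pa) | apply (polar_sphere _ _ _ Pb)]. }
  apply polar_intro; [apply sphere_normalize; auto|]. intros w Hw.
  rewrite dot_sym, dot_normalize_l, dot_vcomb_l, (dot_sym n a w), (dot_sym n b w).
  pose proof (polar_dot n W a w Pa Hw). pose proof (polar_dot n W b w Pb Hw).
  destruct (sqrt_sq_pos _ Hv) as [_ HS0].
  apply Rle_ge, Rmult_le_pos; [nra | apply Rlt_le, Rinv_0_lt_compat; auto].
Qed.

(* First-order optimality of a maximizer [w0] of [x.w] over [W]: moving [w0] along the arc towards
   any [w] in [W] cannot increase [x.w0], which forces [x.w <= (x.w0) (w0.w)]. *)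
Lemma max_point_variational n W x w0 w : subset_of W (sphere n) -> comb_closed n W -> sphere n x ->
  W w0 -> (forall w, W w -> dot n x w <= dot n x w0) -> 0 < dot n x w0 -> W w ->
  dot n x w <= dot n x w0 * dot n w0 w.
Proof.
  intros HS Hc Hx Hw0 Hmax Hm Hw.
  set (m := dot n x w0) in *. set (a := dot n w0 w). set (b := dot n x w).
  pose proof (HS _ Hw0) as Sw0. pose proof (HS _ Hw) as Sw.
  pose proof (sphere_dot_bounds n w0 w Sw0 Sw) as Ba. fold a in Ba.
  pose proof (sphere_dot_bounds n x w Hx Sw) as Bb. fold b in Bb.
  pose proof (sphere_dot_bounds n x w0 Hx Sw0) as Bm. fold m in Bm.
  apply Rnot_lt_le; intros Hlt.
  set (g := m * (b - m * a)). assert (Hg : 0 < g) by (unfold g; nra).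
  set (t := Rmin (1/4) (Rmin (g/2) (m/2))).
  assert (Ht0 : 0 < t) by (unfold t; repeat apply Rmin_glb_lt; lra).
  assert (Ht1 : t <= 1/4) by apply Rmin_l.
  assert (Ht2 : t <= g/2) by (unfold t; eapply Rle_trans; [apply Rmin_r | apply Rmin_l]).
  assert (Ht3 : t <= m/2) by (unfold t; eapply Rle_trans; [apply Rmin_r | apply Rmin_r]).
  set (v := vcomb (1 - t) w0 t w).
  assert (Hvv : dot n v v = (1 - t) * (1 - t) + 2 * t * (1 - t) * a + t * t).
  { unfold v. rewrite dot_vcomb_l, !dot_vcomb_r, (dot_sym n w w0), (proj2 Sw0), (proj2 Sw).
    fold a. ring. }
  assert (HN : 0 < dot n v v).
  { rewrite Hvv. assert (0 < t * (1 - t)) by nra. nra. }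
  pose proof (Hmax _ (Hc _ _ Hw0 Hw (1 - t) t ltac:(lra) ltac:(lra) HN)) as Hle. fold v m in Hle.
  rewrite dot_sym, dot_normalize_l in Hle.
  replace (dot n v x) with ((1 - t) * m + t * b) in Hle
    by (unfold v; rewrite dot_vcomb_l, (dot_sym n w0 x), (dot_sym n w x); fold m b; ring).
  destruct (sqrt_sq_pos _ HN) as [HS2 HS0]. set (S := sqrt (dot n v v)) in *.
  assert (Hle2 : (1 - t) * m + t * b <= m * S).
  { apply Rmult_le_compat_r with (r := S) in Hle; [|lra].
    replace (((1 - t) * m + t * b) / S * S) with ((1 - t) * m + t * b) in Hle by (field; lra). lra. }
  assert (Hpos : 0 < (1 - t) * m + t * b) by nra.
  assert (Hsq : ((1 - t) * m + t * b) * ((1 - t) * m + t * b) <= m * m * (S * S)) by nra.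
  rewrite HS2, Hvv in Hsq.
  assert (E : m * m * ((1 - t) * (1 - t) + 2 * t * (1 - t) * a + t * t)
              - ((1 - t) * m + t * b) * ((1 - t) * m + t * b)
              = - (2 * t * (1 - t) * g) + t * t * (m * m - b * b)) by (unfold g; ring).
  assert (H1 : 2 * t * (1 - t) * g <= t * t * (m * m - b * b)) by lra.
  assert (H2 : t * t * (m * m - b * b) <= t * t * 1) by (apply Rmult_le_compat_l; nra).
  assert (H3 : t * (2 * (1 - t) * g) <= t * t) by lra.
  apply Rmult_le_reg_l in H3; auto. nra.
Qed.

(* The pole [Q] of the great sphere separating [x] from its nearest point [w0] of [W]:
   [Q] is the normalization of [(x.w0) w0 - x]. *)
Lemma far_point_separation n W x eta : subset_of W (sphere n) -> nonempty W -> sclosed n W ->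
  comb_closed n W -> sphere n x -> 0 < eta -> eta <= 1 -> (forall w, W w -> dot n x w <= 1 - eta) ->
  exists Q, polar n W Q /\ dot n Q x < 0 /\ eta <= dot n Q x * dot n Q x.
Proof.
  intros HS Hne Hcl Hc Hx He1 He2 Hfar.
  destruct (dot_max_attained n W x HS Hne Hcl) as [w0 [Hw0 Hmax]].
  set (m := dot n x w0) in *. pose proof (Hfar _ Hw0) as Hm. fold m in Hm.
  destruct (Rle_lt_dec m 0) as [Hm0|Hm0].
  - exists (vopp x). rewrite dot_vopp_l, (proj2 Hx). split; [|lra].
    apply polar_intro; [apply sphere_vopp; auto|]. intros w Hw.
    rewrite dot_sym, dot_vopp_l. pose proof (Hmax w Hw). lra.
  - pose proof (HS _ Hw0) as Sw0.
    set (v := vcomb m w0 (-1) x).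
    assert (Hvv : dot n v v = 1 - m * m).
    { unfold v. rewrite dot_vcomb_l, !dot_vcomb_r, (proj2 Sw0), (proj2 Hx), (dot_sym n w0 x).
      fold m. ring. }
    pose proof (sphere_dot_bounds n x w0 Hx Sw0). fold m in H.
    assert (HN : 0 < dot n v v) by (rewrite Hvv; nra).
    destruct (sqrt_sq_pos _ HN) as [HS2 HS0].
    assert (Hvx : dot n v x = m * m - 1).
    { unfold v. rewrite dot_vcomb_l, (dot_sym n w0 x), (proj2 Hx). fold m. ring. }
    exists (normalize n v). rewrite dot_normalize_l, Hvx. set (S := sqrt (dot n v v)) in *.
    split; [|split].
    + apply polar_intro; [apply sphere_normalize; auto; apply supp_vcomb; [apply Sw0 | apply Hx]|].
      intros w Hw. pose proof (max_point_variational n W x w0 w HS Hc Hx Hw0 Hmax Hm0 Hw).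
      rewrite dot_sym, dot_normalize_l. fold S. unfold v. rewrite dot_vcomb_l.
      apply Rle_ge, Rle_div_of_mul; auto. fold m in H0. lra.
    + apply Rmult_lt_reg_r with S; auto. rewrite Rmult_0_l.
      replace ((m * m - 1) / S * S) with (m * m - 1) by (field; lra). nra.
    + replace ((m * m - 1) / S * ((m * m - 1) / S)) with ((1 - m * m) * (1 - m * m) / (S * S))
        by (field; lra).
      rewrite HS2, Hvv. replace ((1 - m * m) * (1 - m * m) / (1 - m * m)) with (1 - m * m)
        by (field; nra). nra.
Qed.

Lemma polar_polar n W : subset_of W (sphere n) -> nonempty W -> sclosed n W -> comb_closed n W ->
  seteq (polar n (polar n W)) W.
Proof.
  intros HS Hne Hcl Hc x. split.
  - intros [Hx Hpp]. apply NNPP; intros Hnx.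
    destruct (dot_max_attained n W x HS Hne Hcl) as [w0 [Hw0 Hmax]].
    set (m := dot n x w0) in *.
    pose proof (sphere_dot_bounds n x w0 Hx (HS _ Hw0)). fold m in H.
    assert (Hm1 : m < 1).
    { destruct (Req_dec m 1) as [E|E]; [|lra]. exfalso. apply Hnx.
      rewrite (sphere_dot_eq1 n x w0 Hx (HS _ Hw0) E). exact Hw0. }
    pose proof (Rmin_l (1 - m) 1).
    destruct (far_point_separation n W x (Rmin (1 - m) 1) HS Hne Hcl Hc Hx) as [Q [PQ [HQx _]]].
    + apply Rmin_glb_lt; lra.
    + apply Rmin_r.
    + intros w Hw. pose proof (Hmax w Hw). lra.
    + destruct (Hpp Q PQ) as [_ HH]. lra.
  - intros Hw. apply polar_intro; [apply HS; auto|]. intros Q PQ.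
    rewrite dot_sym. apply (polar_dot n W); auto.
Qed.

Lemma HWulff_sphere n P W : HWulff n P W -> subset_of W (sphere n).
Proof. intros [[HS _] _]; exact HS. Qed.

Lemma HWulff_closed n P W : HWulff n P W -> sclosed n W.
Proof. intros [[_ [_ Hcl]] _]; exact Hcl. Qed.

Lemma HWulff_interior n P W : HWulff n P W -> interior_pt n W P.
Proof. intros [_ [_ [Hint _]]]; exact Hint. Qed.

Lemma HWulff_dot_pos n P W : HWulff n P W -> forall x, W x -> dot n P x > 0.
Proof.
  intros [[HS _] [Hdis _]] x Hx. apply Rnot_le_gt; intros Hle.
  apply (Hdis x Hx). split; [apply HS; auto|]. rewrite dot_vopp_l. lra.
Qed.

Lemma HWulff_comb_closed n P W : HWulff n P W -> comb_closed n W.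
Proof.
  intros HW a b Ha Hb s t Hs Ht Hv.
  destruct HW as [_ [_ [_ [[_ Harc] _]]]].
  assert (Hst : 0 < s + t).
  { destruct (Rle_lt_dec (s + t) 0); auto. assert (s = 0) by lra. assert (t = 0) by lra. subst.
    rewrite dot_vcomb_l, !dot_vcomb_r in Hv. lra. }
  set (tau := t / (s + t)).
  assert (Htau : 0 <= tau <= 1).
  { unfold tau; split; [apply Rmult_le_pos; auto; apply Rlt_le, Rinv_0_lt_compat; auto|].
    apply Rmult_le_reg_r with (s + t); auto. unfold Rdiv. rewrite Rmult_assoc, Rinv_l; lra. }
  pose proof (Harc a b Ha Hb tau Htau) as H. rewrite arcpt_normalize in H.
  replace (vcomb (1 - tau) a tau b) with (vcomb (/ (s + t)) (vcomb s a t b) 0 (vcomb s a t b)) in H.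
  - rewrite normalize_scale in H; auto. apply Rinv_0_lt_compat; auto.
  - apply functional_extensionality; intros i. unfold vcomb, tau. field. lra.
Qed.

Lemma HWulff_intro n P W : sphere n P -> subset_of W (sphere n) -> sclosed n W -> comb_closed n W ->
  (forall x, W x -> dot n P x > 0) -> interior_pt n W P -> HWulff n P W.
Proof.
  intros SP HS Hcl Hc Hpos Hint.
  assert (Hdis : forall x, W x -> ~ hemi n (vopp P) x).
  { intros x Hx [_ H]. rewrite dot_vopp_l in H. pose proof (Hpos x Hx). lra. }
  assert (Hne : nonempty W) by (exists P; apply Hint).
  split; [split; auto|]. split; auto. split; auto. split; [|split; auto; exists P; auto].
  split; [exists (vopp P); split; auto; apply sphere_vopp; auto|].
  intros A B HA HB t Ht. rewrite arcpt_normalize. apply Hc; auto; try lra.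
  apply (dot_self_pos_of_dot n P). rewrite dot_vcomb_r.
  pose proof (Hpos A HA). pose proof (Hpos B HB).
  destruct (Rle_lt_dec t 0); [assert (t = 0) by lra; subst|]; nra.
Qed.

(* Tilting [P] slightly away from [Q] stays inside [W], hence on the nonnegative side of [Q]. *)
Lemma polar_dot_pos_of_interior n W P : sphere n P -> interior_pt n W P ->
  forall Q, polar n W Q -> dot n P Q > 0.
Proof.
  intros SP [_ [eps0 [Heps0 Hball]]] Q PQ. pose proof (polar_sphere _ _ _ PQ) as SQ.
  destruct (sdist_lt_of_dot_gt n eps0 Heps0) as [eta0 [Heta0 Hsd]].
  set (delta := Rmin 1 eta0 / 4).
  assert (Hm1 : Rmin 1 eta0 <= 1) by apply Rmin_l. assert (Hm2 : Rmin 1 eta0 <= eta0) by apply Rmin_r.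
  assert (Hm0 : 0 < Rmin 1 eta0) by (apply Rmin_glb_lt; lra).
  assert (Hd0 : 0 < delta) by (unfold delta; lra).
  set (u := vcomb (- delta) Q 0 Q).
  assert (Huu : dot n u u = delta * delta).
  { unfold u. rewrite dot_vcomb_l, !dot_vcomb_r, (proj2 SQ). ring. }
  destruct (normalize_perturb n P u (delta * delta) eta0 SP) as [Hvv Hnear];
    [lra | nra | unfold delta; nra | unfold delta; nra|].
  assert (Sx : sphere n (normalize n (vcomb 1 P 1 u))).
  { apply sphere_normalize; auto. apply supp_vcomb; [apply SP | apply supp_vcomb; apply SQ]. }
  pose proof (polar_dot n W Q _ PQ (Hball _ Sx (Hsd _ _ SP Sx Hnear))) as HxQ.
  rewrite dot_normalize_l in HxQ. destruct (sqrt_sq_pos _ Hvv) as [_ HS0].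
  assert (HxQ' : 0 <= dot n (vcomb 1 P 1 u) Q).
  { apply Rnot_lt_le; intros Hlt.
    assert (dot n (vcomb 1 P 1 u) Q / sqrt (dot n (vcomb 1 P 1 u) (vcomb 1 P 1 u)) < 0)
      by (apply Rmult_neg_pos; auto; apply Rinv_0_lt_compat; auto).
    lra. }
  unfold u in HxQ'. rewrite !dot_vcomb_l, (proj2 SQ) in HxQ'. lra.
Qed.

(* On a compact [W] with [P.w > 0], [P.w] is bounded below by some [c > 0], so a whole cap around [P]
   lies in the polar of [W]. *)
Lemma interior_polar_of_dot_pos n W P : sphere n P -> subset_of W (sphere n) -> nonempty W ->
  sclosed n W -> (forall x, W x -> dot n P x > 0) -> interior_pt n (polar n W) P.
Proof.
  intros SP HS Hne Hcl Hpos.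
  destruct (dot_max_attained n W (vopp P) HS Hne Hcl) as [w0 [Hw0 Hmin]].
  set (c := dot n P w0). assert (Hc0 : c > 0) by (apply Hpos; auto).
  assert (Hcw : forall w, W w -> dot n P w >= c).
  { intros w Hw. pose proof (Hmin w Hw). rewrite !dot_vopp_l in H. unfold c. lra. }
  split.
  - apply polar_intro; auto. intros w Hw. rewrite dot_sym. pose proof (Hpos w Hw). lra.
  - destruct (dot_gt_of_sdist_lt n (c * c / 2)) as [eps [Heps Hsd]]; [nra|].
    exists eps. split; auto. intros Q SQ HPQ. pose proof (Hsd P Q SP SQ HPQ) as HPQ'.
    apply polar_intro; auto. intros w Hw.
    pose proof (dot_diff_sq_le n w P Q SP SQ) as D. rewrite (proj2 (HS w Hw)) in D.
    pose proof (Hcw w Hw). rewrite (dot_sym n P w) in H.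
    apply Rle_ge, Rnot_lt_le; intros Hlt. nra.
Qed.

Lemma polar_HWulff n P W : sphere n P -> HWulff n P W -> HWulff n P (polar n W).
Proof.
  intros SP HW. pose proof (HWulff_sphere _ _ _ HW) as HS.
  pose proof (HWulff_interior _ _ _ HW) as Hint.
  apply HWulff_intro; auto.
  - apply polar_sphere.
  - apply polar_closed.
  - apply polar_comb_closed.
  - apply polar_dot_pos_of_interior; auto.
  - apply interior_polar_of_dot_pos; auto.
    + exists P; apply Hint.
    + apply (HWulff_closed _ _ _ HW).
    + apply (HWulff_dot_pos _ _ _ HW).
Qed.

Definition dot_hclose n (A B : set) (eta : R) : Prop :=
  (forall x, A x -> exists y, B y /\ dot n x y > 1 - eta) /\
  (forall y, B y -> exists x, A x /\ dot n x y > 1 - eta).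

Lemma HWulff_cl_near n P W eta : HWulff_cl n P W -> eta > 0 ->
  exists W', HWulff n P W' /\ dot_hclose n W W' eta.
Proof.
  intros [[HS _] Hcl] He. destruct (dot_gt_of_sdist_lt n eta He) as [eps [Heps Hsd]].
  destruct (Hcl eps Heps) as [W' [HW' [r [Hr [H1 H2]]]]].
  pose proof (HWulff_sphere _ _ _ HW') as HS'.
  exists W'. split; auto. split.
  - intros x Hx. destruct (H1 x Hx) as [y [Hy Hd]]. exists y. split; auto. apply Hsd; auto; lra.
  - intros y Hy. destruct (H2 y Hy) as [x [Hx Hd]]. exists x. split; auto. apply Hsd; auto; lra.
Qed.

Lemma HWulff_cl_contains n P W : sphere n P -> HWulff_cl n P W -> W P.
Proof.
  intros SP Hcl. pose proof Hcl as [[HS [_ Hc]] _].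
  apply (sclosed_dot n W P Hc HS SP). intros eta He.
  destruct (HWulff_cl_near n P W eta Hcl He) as [W' [HW' [_ H2]]].
  destruct (H2 P (proj1 (HWulff_interior _ _ _ HW'))) as [x [Hx Hd]].
  exists x. split; auto. rewrite dot_sym; auto.
Qed.

Lemma HWulff_cl_dot_nonneg n P W : HWulff_cl n P W -> forall w, W w -> dot n P w >= 0.
Proof.
  intros Hcl w Hw. pose proof Hcl as [[HS _] _].
  apply dot_ge_of_approx; [apply HS; auto|]. intros eta He.
  destruct (HWulff_cl_near n P W eta Hcl He) as [W' [HW' [H1 _]]].
  destruct (H1 w Hw) as [y [Hy Hd]]. exists y.
  split; [apply (HWulff_sphere _ _ _ HW'); auto|].
  pose proof (HWulff_dot_pos _ _ _ HW' y Hy). split; auto; lra.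
Qed.

Lemma dot_vcomb_self_le n a x b y :
  dot n (vcomb a x b y) (vcomb a x b y) <= 2 * (a * a * dot n x x + b * b * dot n y y).
Proof.
  pose proof (dot_self_ge0 n (vcomb a x (- b) y)) as H.
  rewrite !dot_vcomb_l, !dot_vcomb_r, (dot_sym n y x) in *. nra.
Qed.

Lemma dot_sub_self_sphere n x y : sphere n x -> sphere n y ->
  dot n (vcomb 1 y (-1) x) (vcomb 1 y (-1) x) = 2 - 2 * dot n x y.
Proof.
  intros [_ Hx] [_ Hy]. rewrite dot_vcomb_l, !dot_vcomb_r, Hx, Hy, (dot_sym n y x). ring.
Qed.

Lemma normalize_comb_near n a b s t eta : sphere n a -> sphere n b -> 0 <= s -> 0 <= t ->
  0 < dot n (vcomb s a t b) (vcomb s a t b) -> eta > 0 ->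
  exists eta1, eta1 > 0 /\ forall a' b', sphere n a' -> sphere n b' ->
    dot n a a' > 1 - eta1 -> dot n b b' > 1 - eta1 ->
    0 < dot n (vcomb s a' t b') (vcomb s a' t b') ->
    dot n (normalize n (vcomb s a t b)) (normalize n (vcomb s a' t b')) > 1 - eta.
Proof.
  intros Sa Sb Hs Ht Hv He.
  set (v := vcomb s a t b) in *.
  assert (Sc : sphere n (normalize n v)) by (apply sphere_normalize; auto; apply supp_vcomb; [apply Sa | apply Sb]).
  destruct (sqrt_sq_pos _ Hv) as [HS2 HS0]. set (S := sqrt (dot n v v)) in *.
  set (rho := Rmin (1/16) (eta/16)).
  assert (Hr0 : 0 < rho) by (unfold rho; apply Rmin_glb_lt; lra).
  assert (Hr1 : rho <= 1/16) by apply Rmin_l. assert (Hr2 : rho <= eta/16) by apply Rmin_r.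
  set (K := 4 * (s * s + t * t) + 1). assert (HK : 0 < K) by (unfold K; nra).
  exists (dot n v v * rho / K). split; [apply Rlt_gt, Rdiv_lt_0_compat; nra|].
  intros a' b' Sa' Sb' Haa Hbb Hv'.
  set (v' := vcomb s a' t b') in *.
  (* [v' / S] is the unit vector [v / S] perturbed by the small vector [u = (v' - v) / S]. *)
  set (u := vcomb (s / S) (vcomb 1 a' (-1) a) (t / S) (vcomb 1 b' (-1) b)).
  assert (Heq : vcomb 1 (normalize n v) 1 u = vcomb (/ S) v' 0 v').
  { apply functional_extensionality; intros i. unfold normalize. fold S. unfold u, v', v, vcomb, Rdiv. ring. }
  set (d := (4 * (s * s) * (1 - dot n a a') + 4 * (t * t) * (1 - dot n b b')) / dot n v v).
  assert (Hd : dot n u u <= d).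
  { eapply Rle_trans; [apply dot_vcomb_self_le|].
    rewrite !dot_sub_self_sphere by assumption.
    unfold d. rewrite <- HS2. apply Req_le. field. lra. }
  pose proof (sphere_dot_bounds n a a' Sa Sa'). pose proof (sphere_dot_bounds n b b' Sb Sb').
  assert (Hdd : 0 <= d) by (unfold d; apply Rmult_le_pos; [nra | apply Rlt_le, Rinv_0_lt_compat; auto]).
  assert (Hdr : d <= rho).
  { unfold d. apply Rmult_le_reg_r with (dot n v v); auto.
    unfold Rdiv. rewrite Rmult_assoc, Rinv_l, Rmult_1_r by lra.
    assert (Hk : dot n v v * rho / K * K = dot n v v * rho) by (field; lra).
    unfold K in *. nra. }
  destruct (normalize_perturb n (normalize n v) u d eta Sc Hd Hdd) as [_ Hcc]; try lra.
  rewrite Heq, normalize_scale in Hcc; auto. apply Rinv_0_lt_compat; auto.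
Qed.

Lemma HWulff_cl_comb_closed n P W : HWulff_cl n P W -> comb_closed n W.
Proof.
  intros Hcl a b Ha Hb s t Hs Ht Hv. pose proof Hcl as [[HS [_ Hc]] _].
  pose proof (HS a Ha) as Sa. pose proof (HS b Hb) as Sb.
  assert (Sc : sphere n (normalize n (vcomb s a t b)))
    by (apply sphere_normalize; auto; apply supp_vcomb; [apply Sa | apply Sb]).
  apply (sclosed_dot n W _ Hc HS Sc). intros eta He.
  destruct (normalize_comb_near n a b s t (eta / 4) Sa Sb Hs Ht Hv) as [eta1 [He1 Hnear]]; [lra|].
  set (eta2 := Rmin eta1 (eta / 4)).
  assert (He2 : eta2 > 0) by (unfold eta2; apply Rmin_glb_lt; lra).
  assert (He2a : eta2 <= eta1) by apply Rmin_l. assert (He2b : eta2 <= eta / 4) by apply Rmin_r.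
  destruct (HWulff_cl_near n P W eta2 Hcl He2) as [W' [HW' [H1 H2]]].
  pose proof (HWulff_sphere _ _ _ HW') as HS'. pose proof (HWulff_dot_pos _ _ _ HW') as Hpos'.
  destruct (H1 a Ha) as [a' [Ha' Haa]]. destruct (H1 b Hb) as [b' [Hb' Hbb]].
  assert (Hv' : 0 < dot n (vcomb s a' t b') (vcomb s a' t b')).
  { apply (dot_self_pos_of_dot n P). rewrite dot_vcomb_r.
    pose proof (Hpos' a' Ha'). pose proof (Hpos' b' Hb').
    assert (Hst : 0 < s + t).
    { destruct (Rle_lt_dec (s + t) 0); auto. assert (s = 0) by lra. assert (t = 0) by lra. subst.
      rewrite dot_vcomb_l, !dot_vcomb_r in Hv. lra. }
    destruct (Rle_lt_dec s 0); [assert (s = 0) by lra; subst|]; nra. }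
  pose proof (Hnear a' b' (HS' _ Ha') (HS' _ Hb') ltac:(lra) ltac:(lra) Hv') as Hcc.
  assert (Wc' : W' (normalize n (vcomb s a' t b'))) by (apply (HWulff_comb_closed _ _ _ HW'); auto).
  destruct (H2 _ Wc') as [y [Hy Hyc]]. exists y. split; auto.
  pose proof (dot_triangle n _ _ y Sc (HS' _ Wc') (HS y Hy)). rewrite (dot_sym n y) in Hyc. lra.
Qed.

(* The Wulff shape approximating [W]: the polar of the polar of [W], with every constraint [Q] tilted
   towards [P] by [delta] and a cap [P.x >= rho] imposed. *)
Definition wulff_approx n P W (rho delta : R) : set := fun x =>
  sphere n x /\ dot n P x >= rho /\ forall Q, polar n W Q -> dot n Q x + delta * dot n P x >= 0.

Section WulffApprox.
Variables (n : nat) (P : vec) (W : set) (rho delta : R).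
Hypotheses (SP : sphere n P) (HP : W P) (Hrho : 0 < rho < 1) (Hdelta : 0 < delta <= 1/2).

Let polar_dot_P Q : polar n W Q -> dot n P Q >= 0.
Proof. intros PQ. apply (polar_dot n W Q P PQ HP). Qed.

Lemma wulff_approx_sphere : subset_of (wulff_approx n P W rho delta) (sphere n).
Proof. intros x [Hx _]; exact Hx. Qed.

Lemma wulff_approx_closed : sclosed n (wulff_approx n P W rho delta).
Proof.
  apply sclosed_of_dot; [apply wulff_approx_sphere|].
  intros x Hx Happ. split; auto. split.
  - apply dot_ge_of_approx; auto. intros eta He. destruct (Happ eta He) as [y [[Sy [Hy _]] Hxy]].
    exists y; auto.
  - intros Q PQ. replace (dot n Q x + delta * dot n P x) with (dot n (vcomb 1 Q delta P) x)
      by (rewrite dot_vcomb_l; ring).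
    apply dot_ge_of_approx; auto. intros eta He. destruct (Happ eta He) as [y [[Sy [_ Hy]] Hxy]].
    exists y. split; auto. split; auto. rewrite dot_vcomb_l. specialize (Hy Q PQ). lra.
Qed.

Lemma wulff_approx_comb_closed : comb_closed n (wulff_approx n P W rho delta).
Proof.
  intros a b [Sa [Pa Qa]] [Sb [Pb Qb]] s t Hs Ht Hv.
  set (v := vcomb s a t b) in *.
  assert (Hsupp : supp n v) by (apply supp_vcomb; [apply Sa | apply Sb]).
  destruct (sqrt_sq_pos _ Hv) as [HS2 HS0]. set (S := sqrt (dot n v v)) in *.
  split; [apply sphere_normalize; auto|].
  rewrite (dot_sym n P), dot_normalize_l. fold S.
  replace (dot n v P) with (s * dot n P a + t * dot n P b)
    by (unfold v; rewrite dot_vcomb_l, (dot_sym n a P), (dot_sym n b P); ring).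
  split.
  - assert (Hvv : dot n v v = s * s + t * t + 2 * s * t * dot n a b)
      by (unfold v; rewrite dot_vcomb_l, !dot_vcomb_r, (proj2 Sa), (proj2 Sb), (dot_sym n b a); ring).
    pose proof (sphere_dot_bounds n a b Sa Sb).
    assert (HSst : S <= s + t).
    { assert (0 <= s * t * (1 - dot n a b)) by (apply Rmult_le_pos; nra).
      assert (S * S <= (s + t) * (s + t)) by (rewrite HS2, Hvv; nra). nra. }
    apply Rle_ge, Rle_div_of_mul; auto. nra.
  - intros Q PQ. specialize (Qa Q PQ). specialize (Qb Q PQ).
    rewrite (dot_sym n Q), dot_normalize_l. fold S.
    replace (dot n v Q) with (s * dot n Q a + t * dot n Q b)
      by (unfold v; rewrite dot_vcomb_l, (dot_sym n a Q), (dot_sym n b Q); ring).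
    replace ((s * dot n Q a + t * dot n Q b) / S + delta * ((s * dot n P a + t * dot n P b) / S))
      with ((s * (dot n Q a + delta * dot n P a) + t * (dot n Q b + delta * dot n P b)) / S)
      by (field; lra).
    apply Rle_ge, Rle_div_of_mul; auto. nra.
Qed.

(* Near [P], the tilt [delta P.x] dominates the perturbation of [Q.x] away from [Q.P >= 0]. *)
Lemma wulff_approx_interior : interior_pt n (wulff_approx n P W rho delta) P.
Proof.
  split.
  - split; auto. rewrite (proj2 SP). split; [lra|]. intros Q PQ. pose proof (polar_dot_P Q PQ).
    rewrite dot_sym. lra.
  - set (e := Rmin (1 - rho) (delta * delta / 8)).
    assert (He : e > 0) by (unfold e; apply Rmin_glb_lt; nra).
    assert (e <= 1 - rho) by apply Rmin_l. assert (e <= delta * delta / 8) by apply Rmin_r.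
    destruct (dot_gt_of_sdist_lt n e He) as [eps [Heps Hsd]]. exists eps. split; auto.
    intros x Sx Hpx. pose proof (Hsd P x SP Sx Hpx) as Hn.
    split; auto. split; [lra|].
    intros Q PQ. pose proof (polar_sphere _ _ _ PQ) as SQ.
    pose proof (dot_diff_sq_le n (vcomb 1 Q delta P) P x SP Sx) as D.
    rewrite !dot_vcomb_l, !dot_vcomb_r, (proj2 SQ), (proj2 SP), (dot_sym n P Q) in D.
    pose proof (polar_dot_P Q PQ). rewrite (dot_sym n P Q) in H1.
    pose proof (sphere_dot_bounds n Q P SQ SP). pose proof (sphere_dot_bounds n P x SP Sx).
    assert (Haa : 1 * (1 * 1 + delta * dot n Q P) + delta * (1 * dot n Q P + delta * 1) <= 4) by nra.
    assert (Hr : (1 * (1 * 1 + delta * dot n Q P) + delta * (1 * dot n Q P + delta * 1))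
                 * (2 * (1 - dot n P x)) < delta * delta) by nra.
    apply Rnot_lt_ge; intros Hlt. nra.
Qed.

Lemma wulff_approx_HWulff : HWulff n P (wulff_approx n P W rho delta).
Proof.
  apply HWulff_intro; auto.
  - apply wulff_approx_sphere.
  - apply wulff_approx_closed.
  - apply wulff_approx_comb_closed.
  - intros x [_ [H _]]. lra.
  - apply wulff_approx_interior.
Qed.

(* Pushing [w] towards [P] lands in the approximant. *)
Lemma wulff_approx_covers mu eta : 2 * rho <= mu -> mu <= 1/4 -> 8 * (mu * mu) < eta ->
  (forall w, W w -> dot n P w >= 0) -> subset_of W (sphere n) ->
  forall w, W w -> exists x, wulff_approx n P W rho delta x /\ dot n w x > 1 - eta.
Proof.
  intros Hmu Hmu1 Hmu2 HPw HS w Hw. pose proof (HS w Hw) as Sw.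
  set (u := vcomb mu P 0 P).
  assert (Huu : dot n u u = mu * mu) by (unfold u; rewrite dot_vcomb_l, !dot_vcomb_r, (proj2 SP); ring).
  destruct (normalize_perturb n w u (mu * mu) eta Sw) as [Hvv Hnear]; [lra | nra | nra | lra |].
  exists (normalize n (vcomb 1 w 1 u)). split; auto.
  assert (Hsupp : supp n (vcomb 1 w 1 u)) by (apply supp_vcomb; [apply Sw | apply supp_vcomb; apply SP]).
  destruct (sqrt_sq_pos _ Hvv) as [HS2 HS0].
  set (S := sqrt (dot n (vcomb 1 w 1 u) (vcomb 1 w 1 u))) in *.
  assert (Hvv' : dot n (vcomb 1 w 1 u) (vcomb 1 w 1 u) = 1 + 2 * mu * dot n P w + mu * mu).
  { unfold u. repeat rewrite ?dot_vcomb_l, ?dot_vcomb_r. rewrite (proj2 Sw), (proj2 SP), (dot_sym n w P). ring. }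
  pose proof (sphere_dot_bounds n P w SP Sw). pose proof (HPw w Hw).
  assert (HS1 : S <= 2) by nra.
  assert (EP : dot n (vcomb 1 w 1 u) P = dot n P w + mu).
  { unfold u. repeat rewrite ?dot_vcomb_l, ?dot_vcomb_r. rewrite (proj2 SP), (dot_sym n w P). ring. }
  split; [apply sphere_normalize; auto|]. split.
  - rewrite dot_sym, dot_normalize_l, EP. fold S. apply Rle_ge, Rle_div_of_mul; auto. nra.
  - intros Q PQ. rewrite (dot_sym n Q), (dot_sym n P), !dot_normalize_l, EP. fold S.
    replace (dot n (vcomb 1 w 1 u) Q) with (dot n Q w + mu * dot n P Q)
      by (unfold u; repeat rewrite ?dot_vcomb_l, ?dot_vcomb_r; rewrite (dot_sym n w Q), (dot_sym n P Q); ring).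
    pose proof (polar_dot n W Q w PQ Hw). pose proof (polar_dot_P Q PQ). rewrite (dot_sym n w Q) in H1.
    replace ((dot n Q w + mu * dot n P Q) / S + delta * ((dot n P w + mu) / S))
      with ((dot n Q w + mu * dot n P Q + delta * (dot n P w + mu)) / S) by (field; lra).
    apply Rle_ge, Rle_div_of_mul; auto. nra.
Qed.

(* A point of the approximant far from [W] would be separated from [W] by some [Q] in its polar,
   and [Q.x >= - delta] bounds that separation. *)
Lemma wulff_approx_near eta : delta * delta < eta -> eta <= 1 -> subset_of W (sphere n) -> sclosed n W ->
  comb_closed n W -> forall x, wulff_approx n P W rho delta x -> exists w, W w /\ dot n w x > 1 - eta.
Proof.
  intros Heta He1 HS Hcl Hc x [Sx [Hpx HQx]]. apply NNPP; intros Hno.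
  assert (Hfar : forall w, W w -> dot n x w <= 1 - eta).
  { intros w Hw. apply Rnot_lt_le; intros Hlt. apply Hno. exists w. split; auto. rewrite dot_sym; lra. }
  destruct (far_point_separation n W x eta HS (ex_intro _ P HP) Hcl Hc Sx) as [Q [PQ [HQx0 HQx1]]];
    [nra | auto | auto |].
  pose proof (HQx Q PQ). pose proof (sphere_dot_bounds n P x SP Sx).
  assert (dot n Q x >= - delta) by nra.
  assert (dot n Q x * dot n Q x <= delta * delta) by nra.
  lra.
Qed.

End WulffApprox.

Lemma HWulff_approx n P W eta : sphere n P -> subset_of W (sphere n) -> sclosed n W -> comb_closed n W ->
  W P -> (forall w, W w -> dot n P w >= 0) -> 0 < eta <= 1 ->
  exists W', HWulff n P W' /\ dot_hclose n W W' eta.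
Proof.
  intros SP HS Hcl Hc HP HPw He.
  assert (Hrho : 0 < eta / 8 < 1) by lra. assert (Hdelta : 0 < eta / 2 <= 1/2) by lra.
  exists (wulff_approx n P W (eta / 8) (eta / 2)).
  split; [apply wulff_approx_HWulff; auto|]. split.
  - apply wulff_approx_covers with (mu := eta / 4); auto; nra.
  - apply wulff_approx_near; auto; nra.
Qed.

Lemma HWulff_cl_intro n P W : sphere n P -> subset_of W (sphere n) -> sclosed n W -> comb_closed n W ->
  W P -> (forall w, W w -> dot n P w >= 0) -> HWulff_cl n P W.
Proof.
  intros SP HS Hcl Hc HP HPw. split; [split; auto; split; auto; exists P; auto|].
  intros eps Heps. destruct (sdist_le_of_dot_ge n (eps / 2)) as [eta [Heta Hsd]]; [lra|].
  pose proof (Rmin_l eta 1). pose proof (Rmin_r eta 1).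
  destruct (HWulff_approx n P W (Rmin eta 1) SP HS Hcl Hc HP HPw) as [W' [HW' [H1 H2]]].
  { split; [apply Rmin_glb_lt|]; lra. }
  pose proof (HWulff_sphere _ _ _ HW') as HS'.
  exists W'. split; auto. exists (eps / 2). split; [lra|]. split.
  - intros x Hx. destruct (H1 x Hx) as [y [Hy Hd]]. exists y. split; auto. apply Hsd; auto. lra.
  - intros y Hy. destruct (H2 y Hy) as [x [Hx Hd]]. exists x. split; auto. apply Hsd; auto. lra.
Qed.

Lemma HWulff_cl_polar_polar n P W : HWulff_cl n P W -> seteq (polar n (polar n W)) W.
Proof.
  intros Hcl. pose proof Hcl as [[HS [Hne Hc]] _].
  apply polar_polar; auto. apply (HWulff_cl_comb_closed n P W Hcl).
Qed.

Lemma polar_HWulff_cl n P W : sphere n P -> HWulff_cl n P W -> HWulff_cl n P (polar n W).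
Proof.
  intros SP Hcl. pose proof (HWulff_cl_contains n P W SP Hcl) as HP.
  apply HWulff_cl_intro; auto.
  - apply polar_sphere.
  - apply polar_closed.
  - apply polar_comb_closed.
  - apply polar_intro; auto. intros w Hw. rewrite dot_sym. apply (HWulff_cl_dot_nonneg n P W Hcl w Hw).
  - intros Q PQ. apply (polar_dot n W Q P PQ HP).
Qed.

Theorem proposition2 (n : nat) (P : vec) :
  (1 <= n)%nat -> sphere n P ->
  (forall W, HWulff_cl n P W -> HScirc n W) /\
  ((forall W, HWulff n P W -> HWulff n P (polar n W)) /\
   (forall W, HWulff n P W -> exists W', HWulff n P W' /\ seteq (polar n W') W)) /\
  ((forall W, HWulff_cl n P W -> HWulff_cl n P (polar n W)) /\
   (forall W, HWulff_cl n P W -> exists W', HWulff_cl n P W' /\ seteq (polar n W') W)) /\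
  (forall W1 W2, HWulff_cl n P W1 -> HWulff_cl n P W2 ->
     seteq (polar n W1) (polar n W2) -> seteq W1 W2).
Proof.
  intros _ SP. split; [|split; [|split]].
  - intros W Hcl. split; [apply Hcl|]. exists P. apply polar_intro; auto. intros w Hw.
    rewrite dot_sym. apply (HWulff_cl_dot_nonneg n P W Hcl w Hw).
  - split; [intros W HW; apply polar_HWulff; auto|].
    intros W HW. exists (polar n W). split; [apply polar_HWulff; auto|].
    apply polar_polar.
    + apply (HWulff_sphere _ _ _ HW).
    + exists P. apply (HWulff_interior _ _ _ HW).
    + apply (HWulff_closed _ _ _ HW).
    + apply (HWulff_comb_closed _ _ _ HW).
  - split; [intros W Hcl; apply polar_HWulff_cl; auto|].
    intros W Hcl. exists (polar n W). split; [apply polar_HWulff_cl; auto|].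
    apply (HWulff_cl_polar_polar n P W Hcl).
  - intros W1 W2 H1 H2 Heq x.
    rewrite <- (HWulff_cl_polar_polar n P W1 H1 x), <- (HWulff_cl_polar_polar n P W2 H2 x).
    apply polar_seteq, Heq.
Qed.
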